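(* For $0<\varepsilon\le 1/2$, let $G(\varepsilon;\eta)=-\dfrac{\varepsilon\Upsilon(\varepsilon^{1/2}\eta)}{1-\varepsilon\eta}$ for $\eta\ge0$ and let $W(\varepsilon;\eta)$ be defined by $G=-\partial_\eta W$, $W(\varepsilon;0)=0$. Then, with a constant $C$ independent of $\varepsilon$: (1) $W(\varepsilon;\cdot)$ is increasing and $0\le W(\varepsilon;\eta)\le1$ for all $\eta>0$; (2) $\lim_{\varepsilon\to0}W(\varepsilon;\infty)=0$; (3) $\int_0^\infty\big(e^{-W(\varepsilon;\eta)}-e^{-W(\varepsilon;\infty)}\big)^2\,d\eta\le C$; (4) $\int_0^\infty G^2(\varepsilon;\eta)\,d\eta\le C$; (5) $\int_0^\infty\int_\eta^\infty G^2(\varepsilon;y)\,dy\,d\eta\le C$.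
   Context: $\Upsilon\in C^\infty([0,\infty))$ is a cut-off function with $0\le\Upsilon\le1$, $\Upsilon(z)=1$ for $0\le z\le1/2$ and $\Upsilon(z)=0$ for $z\ge3/4$. $W(\varepsilon;\infty)=\lim_{\eta\to\infty}W(\varepsilon;\eta)$. *)

From Stdlib Require Import Reals.
From Coquelicot Require Import Coquelicot.
Open Scope R_scope.

(* Cut-off function hypothesis: Upsilon in C^oo([0,oo)), 0 <= Upsilon <= 1,
   Upsilon = 1 on [0,1/2], Upsilon = 0 on [3/4,oo).  Only values on [0,oo)
   are relevant; smoothness is required at every interior point x > 0 (near 0
   the function is constant 1, so this is C^oo up to the boundary). *)
Definition cutoff (Ups : R -> R) : Prop :=
  (forall (n : nat) (x : R), 0 < x -> ex_derive_n Ups n x) /\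
  (forall z, 0 <= z -> 0 <= Ups z <= 1) /\
  (forall z, 0 <= z <= 1/2 -> Ups z = 1) /\
  (forall z, 3/4 <= z -> Ups z = 0).

Definition G (Ups : R -> R) (eps eta : R) : R :=
  - (eps * Ups (sqrt eps * eta)) / (1 - eps * eta).

Definition W (Ups : R -> R) (eps eta : R) : R :=
  RInt (fun y => - G Ups eps y) 0 eta.

Definition Winf (Ups : R -> R) (eps : R) : R :=
  real (Lim (W Ups eps) p_infty).

(* Put a = 3 / (4 sqrt eps).  The cut-off kills -G = eps Ups (sqrt eps eta) / (1 - eps eta)
   for eta >= a, well before the pole 1 / eps, and below a the denominator is at least
   1 - 3/4 sqrt eps, so 0 <= -G <= 11/5 eps.  Hence W is increasing, constant beyond a,
   and W(eps; oo) = O(sqrt eps), which gives (1) and (2).  Each integrand in (3)-(5)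
   vanishes beyond a and is bounded on [0, a] by a power of eps that compensates the
   length a = O(eps^(-1/2)); for (3) use |e^(-W) - e^(-W(oo))| <= W(oo) - W. *)

From Stdlib Require Import Reals Lra.
From Coquelicot Require Import Coquelicot.
Open Scope R_scope.

Lemma continuous_Rmult (f g : R -> R) x :
  continuous f x -> continuous g x -> continuous (fun y => f y * g y) x.
Proof. exact (@continuous_mult R_UniformSpace R_AbsRing f g x). Qed.

Lemma continuous_Rminus (f g : R -> R) x :
  continuous f x -> continuous g x -> continuous (fun y => f y - g y) x.
Proof. exact (@continuous_minus R_UniformSpace R_AbsRing R_NormedModule f g x). Qed.

Lemma continuous_pow2 (f : R -> R) x : continuous f x -> continuous (fun y => f y ^ 2) x.
Proof.
  intros Hf. apply (continuous_ext (fun y => f y * f y)); [intros y; simpl; ring|].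
  now apply continuous_Rmult.
Qed.

Lemma RInt_le_const (f : R -> R) a b K :
  a <= b -> ex_RInt f a b -> (forall x, a < x < b -> f x <= K) ->
  RInt f a b <= K * (b - a).
Proof.
  intros Hab Hf HK.
  apply Rle_trans with (RInt (fun _ => K) a b).
  - apply RInt_le; auto. apply ex_RInt_const.
  - rewrite RInt_const. apply Req_le. unfold scal; simpl; unfold mult; simpl. ring.
Qed.

Lemma RInt_eq_0 (f : R -> R) a b : (forall x, Rmin a b < x < Rmax a b -> f x = 0) ->
  RInt f a b = 0.
Proof.
  intros Hf. rewrite (RInt_ext f (fun _ => 0)) by exact Hf.
  rewrite RInt_const. unfold scal; simpl; unfold mult; simpl. ring.
Qed.

Lemma RInt_vanishing_tail (f : R -> R) c a y :
  (forall u v, ex_RInt f u v) -> (forall x, a < x -> f x = 0) -> a <= y ->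
  RInt f c y = RInt f c a.
Proof.
  intros Hf H0 Hay. rewrite <- (RInt_Chasles f c a y) by auto.
  rewrite (RInt_eq_0 f a y); [apply Rplus_0_r|].
  intros x Hx. apply H0. rewrite Rmin_left in Hx; lra.
Qed.

Lemma is_RInt_gen_vanishing_tail (h f : R -> R) c a :
  (forall x, c < x -> h x = f x) -> (forall x, continuous f x) ->
  (forall x, a < x -> f x = 0) ->
  is_RInt_gen h (at_point c) (Rbar_locally p_infty) (RInt f c a).
Proof.
  intros Hhf Hf H0 P HP.
  assert (Hex : forall u v, ex_RInt f u v)
    by (intros; apply (@ex_RInt_continuous R_CompleteNormedModule); auto).
  apply Filter_prod with (fun x => x = c) (fun y => Rmax c a < y).
  - reflexivity.
  - exists (Rmax c a); auto.
  - intros x y -> Hy. simpl.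
    pose proof (Rmax_l c a); pose proof (Rmax_r c a).
    exists (RInt f c a). split; [|now apply locally_singleton].
    rewrite <- (RInt_vanishing_tail f c a y) by (auto; lra).
    apply (is_RInt_ext f).
    + intros z Hz. rewrite Rmin_left in Hz by lra. symmetry; apply Hhf; lra.
    + apply (@RInt_correct R_CompleteNormedModule), Hex.
Qed.

Lemma continuous_RInt_r (f : R -> R) a x :
  (forall u v, ex_RInt f u v) -> continuous f x -> continuous (fun b => RInt f a b) x.
Proof.
  intros Hf Hfx. apply (@ex_derive_continuous R_AbsRing R_NormedModule).
  exists (f x). apply (@is_derive_RInt R_NormedModule f (fun b => RInt f a b) a); [|exact Hfx].
  apply filter_forall. intros b. apply (@RInt_correct R_CompleteNormedModule), Hf.
Qed.

Lemma continuous_RInt_l (f : R -> R) b x :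
  (forall u v, ex_RInt f u v) -> continuous f x -> continuous (fun a => RInt f a b) x.
Proof.
  intros Hf Hfx. apply (@ex_derive_continuous R_AbsRing R_NormedModule).
  eexists. apply (@is_derive_RInt' R_NormedModule f (fun a => RInt f a b) x b); [|exact Hfx].
  apply filter_forall. intros a. apply (@RInt_correct R_CompleteNormedModule), Hf.
Qed.

Lemma exp_opp_le_1 d : 0 <= d -> exp (- d) <= 1.
Proof.
  intros Hd. pose proof (exp_ineq1_le d). pose proof (exp_pos (- d)).
  assert (exp (- d) * exp d = 1) by (rewrite <- exp_plus, <- exp_0; f_equal; ring).
  nra.
Qed.

Lemma exp_opp_sub_le x y : 0 <= x <= y -> 0 <= exp (- x) - exp (- y) <= y - x.
Proof.
  intros Hxy.
  assert (E : exp (- y) = exp (- x) * exp (- (y - x))) by (rewrite <- exp_plus; f_equal; ring).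
  pose proof (exp_ineq1_le (- (y - x))). pose proof (exp_pos (- x)).
  pose proof (exp_opp_le_1 (y - x)). pose proof (exp_opp_le_1 x).
  rewrite E. split; nra.
Qed.

Lemma filterlim_at_right_0_sqrt_bound (f : R -> R) K :
  at_right 0 (fun e => 0 <= f e <= K * sqrt e) ->
  filterlim f (at_right 0) (locally 0).
Proof.
  intros Hf. change (filterlim f (at_right 0) (Rbar_locally 0)).
  apply (filterlim_le_le (fun _ => 0) f (fun e => K * sqrt e)); [exact Hf| |].
  - apply filterlim_const.
  - replace (Finite 0) with (Finite (K * sqrt 0)) by (rewrite sqrt_0; f_equal; ring).
    apply (filterlim_filter_le_1 _ (filter_le_within (F := locally 0) _)).
    apply (continuous_Rmult (fun _ => K) sqrt 0); [apply continuous_const|apply continuous_sqrt].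
Qed.

Section Cutoff.

Variable Ups : R -> R.
Hypothesis HUps : cutoff Ups.

(* [Ups] is only constrained on [0, +oo); extending it to negative arguments by
   its value [1] at [0] makes it continuous on the whole line. *)
Definition cutoff_ext (z : R) : R := Ups (Rmax z 0).

Lemma cutoff_ext_continuous z : continuous cutoff_ext z.
Proof.
  destruct HUps as [Hsmooth [_ [H1 _]]].
  destruct (Rlt_or_le z (1/2)) as [Hz|Hz].
  - apply (continuous_ext_loc _ (fun _ => 1)); [|apply continuous_const].
    apply (locally_interval _ z m_infty (1/2)); simpl; [easy|easy|].
    intros y _ Hy. unfold cutoff_ext. symmetry; apply H1.
    unfold Rmax; destruct (Rle_dec y 0); lra.
  - apply (continuous_ext_loc _ Ups).
    + apply (locally_interval _ z 0 p_infty); simpl; [lra|easy|].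
      intros y Hy _. unfold cutoff_ext. now rewrite Rmax_left by lra.
    + apply (@ex_derive_continuous R_AbsRing R_NormedModule), (Hsmooth 1%nat z). lra.
Qed.

Lemma cutoff_ext_bounds z : 0 <= cutoff_ext z <= 1.
Proof. apply HUps, Rmax_r. Qed.

Lemma cutoff_ext_vanishes z : 3/4 <= z -> cutoff_ext z = 0.
Proof. intros Hz. unfold cutoff_ext. rewrite Rmax_left by lra. apply HUps; lra. Qed.

Section FixedEps.

Variable eps : R.
Hypothesis Heps : 0 < eps <= 1/2.

(* [Ups (sqrt eps * y)] vanishes for [y >= support_end], well before the pole
   [y = 1 / eps] of [G]. *)
Definition support_end : R := 3 / (4 * sqrt eps).

Lemma sqrt_eps_bounds : 0 < sqrt eps <= 71/100.
Proof.
  assert (0 < sqrt eps) by (apply sqrt_lt_R0; lra).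
  assert (sqrt eps * sqrt eps = eps) by (apply sqrt_sqrt; lra).
  split; nra.
Qed.

Lemma sqrt_eps_support_end : sqrt eps * support_end = 3/4.
Proof. pose proof sqrt_eps_bounds. unfold support_end. field. lra. Qed.

Lemma eps_support_end : eps * support_end = 3/4 * sqrt eps.
Proof.
  rewrite <- sqrt_eps_support_end, <- (sqrt_sqrt eps) at 1 by lra. ring.
Qed.

Lemma support_end_gt0 : 0 < support_end.
Proof. pose proof sqrt_eps_bounds. unfold support_end. apply Rdiv_lt_0_compat; lra. Qed.

(* [dW] agrees with [- G] on [0, +oo) and is continuous everywhere: near the
   pole [y = 1 / eps] the numerator already vanishes identically. *)
Definition dW (y : R) : R := eps * cutoff_ext (sqrt eps * y) / (1 - eps * y).

Lemma dW_G y : 0 <= y -> dW y = - G Ups eps y.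
Proof.
  intros Hy. pose proof sqrt_eps_bounds. unfold dW, G, cutoff_ext.
  rewrite Rmax_left by nra. unfold Rdiv. ring.
Qed.

Lemma dW_vanishes y : support_end <= y -> dW y = 0.
Proof.
  intros Hy. pose proof sqrt_eps_bounds. pose proof sqrt_eps_support_end.
  unfold dW. rewrite cutoff_ext_vanishes by nra. unfold Rdiv. ring.
Qed.

Lemma dW_continuous y : continuous dW y.
Proof.
  pose proof sqrt_eps_bounds. pose proof eps_support_end.
  destruct (Rlt_or_le (eps * y) 1) as [Hy|Hy].
  - apply continuous_Rmult.
    + apply (continuous_Rmult (fun _ => eps)); [apply continuous_const|].
      apply (continuous_comp (fun y => sqrt eps * y)); [|apply cutoff_ext_continuous].
      apply (continuous_Rmult (fun _ => sqrt eps)); [apply continuous_const|apply continuous_id].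
    + apply continuous_Rinv_comp; [|lra].
      apply (continuous_Rminus (fun _ => 1)); [apply continuous_const|].
      apply (continuous_Rmult (fun _ => eps)); [apply continuous_const|apply continuous_id].
  - assert (Hay : support_end < y) by nra.
    apply (continuous_ext_loc _ (fun _ => 0)); [|apply continuous_const].
    apply (locally_interval _ y support_end p_infty); simpl; [lra|easy|].
    intros z Hz _. symmetry; apply dW_vanishes. lra.
Qed.

Lemma ex_RInt_dW u v : ex_RInt dW u v.
Proof. apply (@ex_RInt_continuous R_CompleteNormedModule). intros; apply dW_continuous. Qed.

Lemma dW_ge0 y : 0 <= dW y.
Proof.
  pose proof sqrt_eps_bounds. pose proof eps_support_end. pose proof (cutoff_ext_bounds (sqrt eps * y)).
  destruct (Rlt_or_le y support_end) as [Hy|Hy]; [|now rewrite dW_vanishes].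
  apply Rdiv_le_0_compat; nra.
Qed.

Lemma dW_le_of_le y b : b <= support_end -> y <= b -> dW y <= eps / (1 - eps * b).
Proof.
  intros Hb Hy. pose proof sqrt_eps_bounds. pose proof eps_support_end.
  pose proof (cutoff_ext_bounds (sqrt eps * y)).
  unfold dW, Rdiv. apply Rmult_le_compat; [nra| |nra|].
  - left; apply Rinv_0_lt_compat; nra.
  - apply Rinv_le_contravar; nra.
Qed.

Lemma dW_le_first_half y : y <= support_end / 2 -> dW y <= 7/5 * eps.
Proof.
  intros Hy. pose proof sqrt_eps_bounds. pose proof eps_support_end.
  eapply Rle_trans; [apply (dW_le_of_le y (support_end / 2)); [pose proof support_end_gt0; lra|exact Hy]|].
  replace (eps * (support_end / 2)) with (3/8 * sqrt eps) by lra.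
  apply Rle_div_l; nra.
Qed.

Lemma dW_le y : dW y <= 11/5 * eps.
Proof.
  pose proof sqrt_eps_bounds. pose proof eps_support_end.
  destruct (Rlt_or_le y support_end) as [Hy|Hy]; [|rewrite dW_vanishes; lra].
  eapply Rle_trans; [apply (dW_le_of_le y support_end); lra|].
  rewrite eps_support_end. apply Rle_div_l; nra.
Qed.

Definition Wc (x : R) : R := RInt dW 0 x.

Lemma W_Wc x : 0 <= x -> W Ups eps x = Wc x.
Proof.
  intros Hx. apply RInt_ext. intros z Hz. rewrite Rmin_left in Hz by lra.
  symmetry; apply dW_G; lra.
Qed.

Lemma Wc_increasing x y : x <= y -> Wc x <= Wc y.
Proof.
  intros Hxy. unfold Wc. rewrite <- (RInt_Chasles dW 0 x y) by apply ex_RInt_dW.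
  assert (0 <= RInt dW x y) by (apply RInt_ge_0; auto using ex_RInt_dW, dW_ge0).
  unfold plus; simpl. lra.
Qed.

Lemma Wc_ge0 x : 0 <= x -> 0 <= Wc x.
Proof.
  intros Hx. apply Rle_trans with (Wc 0); [right; symmetry; exact (RInt_point 0 dW)|].
  now apply Wc_increasing.
Qed.

Lemma Wc_support_end x : support_end <= x -> Wc x = Wc support_end.
Proof.
  intros Hx. apply RInt_vanishing_tail; [apply ex_RInt_dW| |exact Hx].
  intros y Hy. apply dW_vanishes. lra.
Qed.

Lemma Wc_le_support_end x : Wc x <= Wc support_end.
Proof.
  destruct (Rle_or_lt x support_end) as [Hx|Hx].
  - now apply Wc_increasing.
  - right. apply Wc_support_end. lra.
Qed.

(* Splitting at [support_end / 2], where the denominator is still at least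
   [1 - 3/8 sqrt eps]; the crude bound [11/5 eps] alone would only give
   [Wc support_end <= 33/20 sqrt eps], which may exceed [1]. *)
Lemma Wc_support_end_le : Wc support_end <= 27/20 * sqrt eps.
Proof.
  pose proof support_end_gt0. pose proof eps_support_end.
  unfold Wc. rewrite <- (RInt_Chasles dW 0 (support_end / 2) support_end) by apply ex_RInt_dW.
  assert (RInt dW 0 (support_end / 2) <= 7/5 * eps * (support_end / 2 - 0)).
  { apply RInt_le_const; [lra|apply ex_RInt_dW|]. intros; apply dW_le_first_half; lra. }
  assert (RInt dW (support_end / 2) support_end <= 11/5 * eps * (support_end - support_end / 2)).
  { apply RInt_le_const; [lra|apply ex_RInt_dW|]. intros; apply dW_le. }
  unfold plus; simpl. nra.
Qed.

Lemma Wc_continuous x : continuous Wc x.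
Proof. apply continuous_RInt_r; [apply ex_RInt_dW|apply dW_continuous]. Qed.

Lemma is_lim_W : is_lim (W Ups eps) p_infty (Wc support_end).
Proof.
  pose proof support_end_gt0.
  apply (filterlim_ext_loc (fun _ => Wc support_end)); [|apply is_lim_const].
  exists support_end. intros x Hx. rewrite W_Wc by lra. symmetry. apply Wc_support_end. lra.
Qed.

Lemma Winf_Wc : Winf Ups eps = Wc support_end.
Proof. unfold Winf. now rewrite (is_lim_unique _ _ _ is_lim_W). Qed.

Lemma exp_W_sub_Winf_sq_integral_le :
  exists l, is_RInt_gen (fun eta => (exp (- W Ups eps eta) - exp (- Winf Ups eps)) ^ 2)
              (at_point 0) (Rbar_locally p_infty) l /\ l <= 2.
Proof.
  pose proof sqrt_eps_bounds. pose proof sqrt_eps_support_end. pose proof support_end_gt0.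
  pose proof Wc_support_end_le.
  set (D := fun eta => (exp (- Wc eta) - exp (- Wc support_end)) ^ 2).
  assert (HD : forall x, continuous D x).
  { intros x. apply continuous_pow2, (continuous_Rminus _ (fun _ => _)); [|apply continuous_const].
    apply (continuous_comp (fun y => - Wc y) exp); [|apply continuous_exp].
    apply (@continuous_opp R_UniformSpace R_AbsRing R_NormedModule), Wc_continuous. }
  exists (RInt D 0 support_end). split.
  - apply is_RInt_gen_vanishing_tail; [|exact HD|].
    + intros x Hx. unfold D. now rewrite W_Wc, Winf_Wc by lra.
    + intros x Hx. unfold D. rewrite Wc_support_end by lra. simpl; ring.
  - assert (Hw0 : 0 <= Wc support_end) by (apply Wc_ge0; lra).
    apply Rle_trans with (Wc support_end ^ 2 * (support_end - 0)).
    + apply RInt_le_const; [lra|now apply (@ex_RInt_continuous R_CompleteNormedModule)|].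
      intros x Hx. unfold D.
      assert (Hx0 : 0 <= Wc x) by (apply Wc_ge0; lra).
      pose proof (Wc_le_support_end x).
      destruct (exp_opp_sub_le (Wc x) (Wc support_end)) as [Hlo Hhi]; [lra|].
      simpl. nra.
    + assert (Wc support_end ^ 2 <= (27/20) ^ 2 * (sqrt eps * sqrt eps)) by (simpl; nra).
      nra.
Qed.

Lemma dW_sq_le y : dW y ^ 2 <= (11/5 * eps) ^ 2.
Proof. pose proof (dW_ge0 y). pose proof (dW_le y). simpl. nra. Qed.

Lemma ex_RInt_dW_sq u v : ex_RInt (fun y => dW y ^ 2) u v.
Proof.
  apply (@ex_RInt_continuous R_CompleteNormedModule).
  intros; apply continuous_pow2, dW_continuous.
Qed.

Lemma is_RInt_gen_G_sq c : 0 <= c ->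
  is_RInt_gen (fun y => G Ups eps y ^ 2) (at_point c) (Rbar_locally p_infty)
    (RInt (fun y => dW y ^ 2) c support_end).
Proof.
  intros Hc. apply is_RInt_gen_vanishing_tail.
  - intros x Hx. rewrite dW_G by lra. simpl; ring.
  - intros; apply continuous_pow2, dW_continuous.
  - intros x Hx. rewrite dW_vanishes by lra. simpl; ring.
Qed.

Lemma G_sq_integral_le :
  exists l, is_RInt_gen (fun eta => G Ups eps eta ^ 2)
              (at_point 0) (Rbar_locally p_infty) l /\ l <= 2.
Proof.
  pose proof sqrt_eps_bounds. pose proof eps_support_end. pose proof support_end_gt0.
  eexists. split; [apply is_RInt_gen_G_sq, Rle_refl|].
  eapply Rle_trans; [apply RInt_le_const; [lra|apply ex_RInt_dW_sq|intros; apply dW_sq_le]|].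
  replace ((11/5 * eps) ^ 2 * (support_end - 0)) with ((11/5) ^ 2 * eps * (eps * support_end))
    by (simpl; ring).
  nra.
Qed.

Lemma G_sq_tail_integral_le :
  exists l, is_RInt_gen
              (fun eta => RInt_gen (fun y => G Ups eps y ^ 2) (at_point eta) (Rbar_locally p_infty))
              (at_point 0) (Rbar_locally p_infty) l /\ l <= 2.
Proof.
  pose proof sqrt_eps_bounds. pose proof eps_support_end. pose proof support_end_gt0.
  set (T := fun eta => RInt (fun y => dW y ^ 2) eta support_end).
  assert (HT : forall x, continuous T x).
  { intros x. apply continuous_RInt_l; [apply ex_RInt_dW_sq|apply continuous_pow2, dW_continuous]. }
  exists (RInt T 0 support_end). split.
  - apply is_RInt_gen_vanishing_tail; [|exact HT|].
    + intros x Hx. apply is_RInt_gen_unique, is_RInt_gen_G_sq. lra.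
    + intros x Hx. apply RInt_eq_0. intros y Hy. rewrite Rmin_right in Hy by lra.
      rewrite dW_vanishes by lra. simpl; ring.
  - apply Rle_trans with ((11/5 * eps) ^ 2 * support_end * (support_end - 0)).
    + apply RInt_le_const; [lra|now apply (@ex_RInt_continuous R_CompleteNormedModule)|].
      intros x Hx. eapply Rle_trans.
      * apply RInt_le_const; [lra|apply ex_RInt_dW_sq|intros; apply dW_sq_le].
      * pose proof (pow2_ge_0 (11/5 * eps)). nra.
    + replace ((11/5 * eps) ^ 2 * support_end * (support_end - 0))
        with ((11/5) ^ 2 * (eps * support_end) * (eps * support_end)) by (simpl; ring).
      rewrite eps_support_end. nra.
Qed.

End FixedEps.

Lemma Winf_at_right_0 : filterlim (Winf Ups) (at_right 0) (locally 0).
Proof.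
  apply (filterlim_at_right_0_sqrt_bound _ (27/20)).
  exists (mkposreal (1/2) ltac:(lra)). intros e He He0.
  change (Rabs (e - 0) < 1/2) in He. rewrite Rminus_0_r, Rabs_right in He by lra.
  assert (Heps : 0 < e <= 1/2) by lra.
  rewrite Winf_Wc by exact Heps. split.
  - apply Wc_ge0; auto. left; now apply support_end_gt0.
  - now apply Wc_support_end_le.
Qed.

End Cutoff.

Theorem lemma4p1 (Ups : R -> R) (HUps : cutoff Ups) :
  (* (2) *)
  filterlim (Winf Ups) (at_right 0) (locally 0) /\
  exists C : R,
    forall eps : R, 0 < eps <= 1/2 ->
      (* (1) *)
      (forall x y, 0 <= x <= y -> W Ups eps x <= W Ups eps y) /\
      (forall eta, 0 < eta -> 0 <= W Ups eps eta <= 1) /\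
      is_lim (W Ups eps) p_infty (Winf Ups eps) /\
      (* (3) *)
      (exists l, is_RInt_gen
                   (fun eta => (exp (- W Ups eps eta) - exp (- Winf Ups eps)) ^ 2)
                   (at_point 0) (Rbar_locally p_infty) l /\ l <= C) /\
      (* (4) *)
      (exists l, is_RInt_gen (fun eta => (G Ups eps eta) ^ 2)
                   (at_point 0) (Rbar_locally p_infty) l /\ l <= C) /\
      (* (5) *)
      (forall eta, 0 <= eta ->
         ex_RInt_gen (fun y => (G Ups eps y) ^ 2) (at_point eta) (Rbar_locally p_infty)) /\
      (exists l, is_RInt_gen
                   (fun eta => RInt_gen (fun y => (G Ups eps y) ^ 2)
                                 (at_point eta) (Rbar_locally p_infty))
                   (at_point 0) (Rbar_locally p_infty) l /\ l <= C).
Proof.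
  split; [exact (Winf_at_right_0 Ups HUps)|].
  exists 2. intros eps Heps.
  split; [|split; [|split; [|split; [|split; [|split]]]]].
  - intros x y Hxy. rewrite !(W_Wc Ups eps Heps) by lra. now apply Wc_increasing.
  - intros eta Heta. rewrite (W_Wc Ups eps Heps) by lra.
    pose proof (sqrt_eps_bounds eps Heps).
    pose proof (Wc_le_support_end Ups HUps eps Heps eta).
    pose proof (Wc_support_end_le Ups HUps eps Heps).
    split; [apply Wc_ge0; auto; lra|lra].
  - rewrite (Winf_Wc Ups HUps eps Heps). now apply is_lim_W.
  - now apply exp_W_sub_Winf_sq_integral_le.
  - now apply G_sq_integral_le.
  - intros eta Heta. eexists. now apply is_RInt_gen_G_sq.
  - now apply G_sq_tail_integral_le.
Qed.
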